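(* Let $K_n$ denote the number of fully heterochronous ranked tree shapes with $n$ leaves. Then $K_1=K_2=1$ and, for every $n\ge 3$, $$K_n=\frac12\sum_{\ell=1}^{n-1}\binom{2n-2}{2\ell-1}K_\ell K_{n-\ell}.$$
   Context: A fully heterochronous ranked tree shape with $n$ leaves is a rooted full binary tree (every node has out-degree $0$ or $2$), without leaf labels, with $n$ leaves, together with a total ordering of all $2n-1$ nodes (leaves included) such that nodes appear in increasing order along every path from the root to a leaf. Two such objects are considered the same if there is an isomorphism of rooted trees preserving the total order. *)

From mathcomp Require Import all_boot.
Set Implicit Arguments. Unset Strict Implicit. Unset Printing Implicit Defensive.

(* The children order of [RNode k l r] carries no
   meaning: it is quotiented out by [rtiso] below.  The label of a node is
   its rank in the total order of all nodes. *)
Inductive rtree : Type :=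
| RLeaf : nat -> rtree
| RNode : nat -> rtree -> rtree -> rtree.

Definition rlabel (t : rtree) : nat :=
  match t with RLeaf k => k | RNode k _ _ => k end.

Fixpoint rlabels (t : rtree) : seq nat :=
  match t with
  | RLeaf k => [:: k]
  | RNode k l r => k :: (rlabels l ++ rlabels r)
  end.

Fixpoint rleaves (t : rtree) : nat :=
  match t with
  | RLeaf _ => 1
  | RNode _ l r => rleaves l + rleaves r
  end.

Fixpoint rincreasing (t : rtree) : bool :=
  match t with
  | RLeaf _ => true
  | RNode k l r => [&& k < rlabel l, k < rlabel r, rincreasing l & rincreasing r]
  end.

Definition fh_ranked (n : nat) (t : rtree) : Prop :=
  [/\ rleaves t = n,
      perm_eq (rlabels t) (iota 0 (2 * n - 1)) &
      rincreasing t].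

Inductive rtiso : rtree -> rtree -> Prop :=
| rtiso_leaf k : rtiso (RLeaf k) (RLeaf k)
| rtiso_keep k l r l' r' :
    rtiso l l' -> rtiso r r' -> rtiso (RNode k l r) (RNode k l' r')
| rtiso_swap k l r l' r' :
    rtiso l l' -> rtiso r r' -> rtiso (RNode k l r) (RNode k r' l').

(* [fh_count n k]: there are exactly k isomorphism classes of fully
   heterochronous ranked tree shapes with n leaves, witnessed by a complete
   system of k pairwise non-isomorphic representatives. *)
Definition fh_count (n k : nat) : Prop :=
  exists reps : seq rtree,
  [/\ size reps = k,
      forall i, i < k -> fh_ranked n (nth (RLeaf 0) reps i),
      forall i j, i < k -> j < k ->
        rtiso (nth (RLeaf 0) reps i) (nth (RLeaf 0) reps j) -> i = j &
      forall t, fh_ranked n t -> exists2 i, i < k & rtiso t (nth (RLeaf 0) reps i)].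

(* Each isomorphism class has exactly one canonical member, in which the left child of
   every node has the smaller rank; [rnormalize] reaches it by swapping children.  A
   canonical increasing tree labelled by the sorted list [x :: y :: r] has root [x], and [y]
   is the root of its left subtree, so the tree is determined by the subset of [r] that joins
   [y] on the left together with the two subtrees.  Enumerating these choices yields a
   duplicate-free list of representatives whose length [F k] depends only on the number [k]
   of labels, and F (k+2) = sum_b F (|b|+1) F (k-|b|) over the subsets [b] of [r].  Splitting
   the subsets of a (k+1)-set according to whether they contain a fixed element, and
   complementing those that do not, gives 2 F (k+2) = sum_j C(k+1,j) F j F (k+1-j).  A tree
   with n leaves has 2n-1 nodes, so F vanishes at even arguments and K n = F (2n-1). *)

From HB Require Import structures.
From mathcomp Require Import all_boot zify.

Set Implicit Arguments.
Unset Strict Implicit.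
Unset Printing Implicit Defensive.

Fixpoint rtree_eqb (t u : rtree) : bool :=
  match t, u with
  | RLeaf a, RLeaf b => a == b
  | RNode a l r, RNode b l' r' => [&& a == b, rtree_eqb l l' & rtree_eqb r r']
  | _, _ => false
  end.

Lemma rtree_eqP : Equality.axiom rtree_eqb.
Proof.
elim=> [a|a l IHl r IHr] [b|b l' r'] /=; try by constructor.
  by apply: (iffP eqP) => [->|[]].
apply: (iffP and3P) => [[/eqP -> /IHl -> /IHr ->] //|[-> <- <-]].
by split => //; [apply/IHl | apply/IHr].
Qed.

HB.instance Definition _ := hasDecEq.Build rtree rtree_eqP.

Lemma mem_rlabel t : rlabel t \in rlabels t.
Proof. by case: t => [k|k l r]; rewrite /= inE eqxx. Qed.

Lemma size_rlabels t : (size (rlabels t)).+1 = 2 * rleaves t.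
Proof. by elim: t => [k|k l IHl r IHr] //=; rewrite size_cat; lia. Qed.

Lemma rincreasing_rlabel_min t z : rincreasing t -> z \in rlabels t -> rlabel t <= z.
Proof.
elim: t => [k _|k l IHl r IHr /and4P[kl kr il ir]] /=; first by rewrite inE => /eqP ->.
rewrite inE mem_cat => /or3P[/eqP -> //|zl|zr].
  exact: leq_trans (ltnW kl) (IHl il zl).
exact: leq_trans (ltnW kr) (IHr ir zr).
Qed.

Lemma rlabel_sorted_head t s :
  rincreasing t -> sorted ltn s -> perm_eq (rlabels t) s -> rlabel t = head 0 s.
Proof.
move=> inc_t; case: s => [|x s] srt p.
  by have := perm_size p; case: t {inc_t p}.
have /predU1P[//|ts] : rlabel t \in x :: s by rewrite -(perm_mem p) mem_rlabel.
have := allP (order_path_min ltn_trans srt) _ ts.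
by rewrite ltnNge (rincreasing_rlabel_min inc_t) // (perm_mem p) mem_head.
Qed.

Lemma rtiso_rlabel t u : rtiso t u -> rlabel t = rlabel u.
Proof. by case. Qed.

Fixpoint rcanonical (t : rtree) : bool :=
  match t with
  | RLeaf _ => true
  | RNode _ l r => [&& rlabel l < rlabel r, rcanonical l & rcanonical r]
  end.

Fixpoint rnormalize (t : rtree) : rtree :=
  match t with
  | RLeaf k => RLeaf k
  | RNode k l r =>
      let l' := rnormalize l in let r' := rnormalize r in
      if rlabel l' < rlabel r' then RNode k l' r' else RNode k r' l'
  end.

Lemma rlabel_rnormalize t : rlabel (rnormalize t) = rlabel t.
Proof. by case: t => //= k l r; case: ifP. Qed.

Lemma rtiso_rnormalize t : rtiso t (rnormalize t).
Proof.
elim: t => [k|k l IHl r IHr] /=; first by constructor.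
by case: ifP => _; [apply: rtiso_keep | apply: rtiso_swap].
Qed.

Lemma perm_rlabels_rnormalize t : perm_eq (rlabels (rnormalize t)) (rlabels t).
Proof.
elim: t => [k|k l IHl r IHr] //=.
case: ifP => _ /=; rewrite perm_cons; first exact: perm_cat.
by rewrite perm_catC; apply: perm_cat.
Qed.

Lemma rincreasing_rnormalize t : rincreasing t -> rincreasing (rnormalize t).
Proof.
elim: t => [k|k l IHl r IHr] //= /and4P[kl kr il ir].
by case: ifP => _ /=; rewrite !rlabel_rnormalize kl kr IHl ?IHr.
Qed.

Lemma rcanonical_rnormalize t : uniq (rlabels t) -> rcanonical (rnormalize t).
Proof.
elim: t => [k|k l IHl r IHr] //=; rewrite cat_uniq => /and4P[_ ul dis ur].
have neq_lr : rlabel l != rlabel r.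
  apply: contraNneq dis => e; apply/hasP.
  by exists (rlabel r); rewrite ?mem_rlabel // -e mem_rlabel.
rewrite -(rlabel_rnormalize l) -(rlabel_rnormalize r) in neq_lr.
by case: ltngtP neq_lr => //= lr _; rewrite lr IHl ?IHr.
Qed.

Lemma rtiso_rcanonical_eq t u : rtiso t u -> rcanonical t -> rcanonical u -> t = u.
Proof.
elim=> [k|k l r l' r' _ IHl _ IHr|k l r l' r' hl _ hr _] //=.
  by move=> /and3P[_ cl cr] /and3P[_ cl' cr']; rewrite (IHl cl cl') (IHr cr cr').
move=> /and3P[lr _ _] /and3P[rl _ _].
rewrite -(rtiso_rlabel hl) -(rtiso_rlabel hr) in rl.
by move: (ltn_trans lr rl); rewrite ltnn.
Qed.

Fixpoint bitseqs (k : nat) : seq bitseq :=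
  if k is k'.+1 then map (cons true) (bitseqs k') ++ map (cons false) (bitseqs k')
  else [:: [::]].

Lemma mem_map_cons (T : eqType) (x y : T) s (ss : seq (seq T)) :
  (x :: s \in map (cons y) ss) = (x == y) && (s \in ss).
Proof.
by apply/mapP/andP => [[s' ss' [-> ->]] | [/eqP -> ss_s]]; [split | exists s].
Qed.

Lemma mem_bitseqs k b : (b \in bitseqs k) = (size b == k).
Proof.
elim: k b => [|k IH] [|c b] //=; rewrite mem_cat.
  by apply/negbTE/norP; split; apply/mapP => -[].
by rewrite !mem_map_cons IH eqSS; case: c; rewrite ?orbF.
Qed.

Lemma bitseqs_uniq k : uniq (bitseqs k).
Proof.
elim: k => [|k IH] //=; rewrite cat_uniq !map_inj_uniq ?IH //=; try by move=> ? ? [].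
by rewrite andbT; apply/hasPn => _ /mapP[b _ ->]; rewrite mem_map_cons.
Qed.

Lemma big_bitseqs_negb k (F : bitseq -> nat) :
  \sum_(b <- bitseqs k) F (map negb b) = \sum_(b <- bitseqs k) F b.
Proof.
elim: k F => [|k IH] F; first by rewrite !big_seq1.
rewrite /= !big_cat !big_map /= addnC.
by rewrite (IH (fun b => F (false :: b))) (IH (fun b => F (true :: b))).
Qed.

Lemma big_bitseqs_count k (F : nat -> nat) :
  \sum_(b <- bitseqs k) F (count id b) = \sum_(0 <= j < k.+1) 'C(k, j) * F j.
Proof.
elim: k F => [|k IH] F; first by rewrite big_seq1 big_nat1 mul1n.
rewrite /= big_cat !big_map /= (IH (fun c => F c.+1)) (IH F).
rewrite [RHS]big_nat_recl // bin0 mul1n.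
under [in RHS]eq_bigr => i _ do rewrite binS mulnDl.
rewrite big_split /= [X in _ = _ + (X + _)]big_nat_recr //= bin_small // mul0n addn0.
by rewrite [X in _ + X]big_nat_recl // bin0 mul1n addnC -addnA.
Qed.

Lemma perm_mask_negb (T : eqType) (b : bitseq) (s : seq T) :
  size b = size s -> perm_eq (mask b s ++ mask (map negb b) s) s.
Proof.
elim: s b => [|x s IH] [|[] b] //= [sb]; first by rewrite perm_cons IH.
by rewrite -cat1s perm_catCA perm_cons IH.
Qed.

Lemma mask_uniq_inj (T : eqType) (s : seq T) (b b' : bitseq) :
  uniq s -> size b = size s -> size b' = size s -> mask b s = mask b' s -> b = b'.
Proof.
elim: s b b' => [|x s IH] [|c b] [|c' b'] //= /andP[xs us] [sb] [sb'].
case: c c' => [] [] /=.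
- by case=> /(IH _ _ us sb sb') ->.
- by move=> eq_x; move: xs; rewrite (mem_mask (m := b')) // -eq_x mem_head.
- by move=> eq_x; move: xs; rewrite (mem_mask (m := b)) // eq_x mem_head.
- by move=> /(IH _ _ us sb sb') ->.
Qed.

Lemma perm_filter_mem_cat (T : eqType) (s1 s2 s : seq T) :
  uniq (s1 ++ s2) -> perm_eq (s1 ++ s2) s ->
  perm_eq s1 (filter [in s1] s) /\ perm_eq s2 (filter (predC [in s1]) s).
Proof.
rewrite cat_uniq => /and3P[_ dis _] p.
split; [rewrite -(permPr (perm_filter [in s1] p)) |
        rewrite -(permPr (perm_filter (predC [in s1]) p))]; rewrite filter_cat.
  by move: dis; rewrite has_filter negbK => /eqP ->; rewrite cats0 (all_filterP (allss s1)).
have -> : filter (predC [in s1]) s1 = [::].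
  by apply/eqP; rewrite -[_ == _]negbK -has_filter has_predC negbK allss.
by rewrite (all_filterP _) // all_predC.
Qed.

(* [m] is fuel, sufficient once [size s <= m].  For sorted [s] the result lists the
   canonical increasing trees labelled by [s]; [b] selects the elements of [r] that join
   [y] in the left subtree. *)
Fixpoint enum_rtrees (m : nat) (s : seq nat) {struct m} : seq rtree :=
  if m is m'.+1 then
    match s with
    | [::] => [::]
    | [:: x] => [:: RLeaf x]
    | x :: y :: r =>
        [seq RNode x lu.1 lu.2 | b <- bitseqs (size r),
           lu <- [seq (l, u) | l <- enum_rtrees m' (y :: mask b r),
                               u <- enum_rtrees m' (mask (map negb b) r)]]
    end
  else [::].

Lemma enum_rtrees_node m x y r :
  enum_rtrees m.+1 [:: x, y & r] =
  [seq RNode x lu.1 lu.2 | b <- bitseqs (size r),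
     lu <- [seq (l, u) | l <- enum_rtrees m (y :: mask b r),
                         u <- enum_rtrees m (mask (map negb b) r)]].
Proof. by []. Qed.

Lemma enum_rtrees_nodeP m x y r t :
  reflect (exists b l u, [/\ size b = size r, l \in enum_rtrees m (y :: mask b r),
                             u \in enum_rtrees m (mask (map negb b) r) & t = RNode x l u])
          (t \in enum_rtrees m.+1 [:: x, y & r]).
Proof.
rewrite enum_rtrees_node.
apply: (iffP allpairsPdep) => [[b [_ [bin /allpairsP[[l u] [lin uin ->]] ->]]] |].
  by exists b, l, u; split=> //; apply/eqP; rewrite -mem_bitseqs.
move=> [b [l [u [sb lin uin ->]]]]; exists b, (l, u).
by split; [rewrite mem_bitseqs sb | apply/allpairsP; exists (l, u) |].
Qed.

Lemma enum_rtrees_spec m s t : sorted ltn s -> t \in enum_rtrees m s ->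
  [/\ perm_eq (rlabels t) s, rincreasing t & rcanonical t].
Proof.
elim: m s t => [|m IH] // [|x [|y r]] t //.
  by move=> _; rewrite inE => /eqP ->; rewrite /= perm_refl.
move=> srt /enum_rtrees_nodeP[b [l [u [sb lin uin ->]]]].
have srt_yr := path_sorted srt; have srt_r := path_sorted srt_yr.
have srt_l : sorted ltn (y :: mask b r) := sorted_mask ltn_trans (true :: b) srt_yr.
have [pl il cl] := IH _ _ srt_l lin.
have [pu iu cu] := IH _ _ (sorted_mask ltn_trans _ srt_r) uin.
have ly : rlabel l = y := rlabel_sorted_head il srt_l pl.
have ur : rlabel u \in r.
  by apply: (mem_mask (m := map negb b)); rewrite -(perm_mem pu) mem_rlabel.
have x_min := allP (order_path_min ltn_trans srt).
have y_min := allP (order_path_min ltn_trans srt_yr).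
split.
- rewrite /= perm_cons; apply: perm_trans (perm_cat pl pu) _.
  exact: (@perm_mask_negb _ (true :: b) (y :: r) (congr1 S sb)).
- by rewrite /= il iu ly !x_min ?mem_head // inE ur orbT.
- by rewrite /= cl cu ly y_min.
Qed.

Lemma head_mem_rlabels_left l r y s :
  rincreasing r -> rlabel l < rlabel r -> sorted ltn (y :: s) ->
  perm_eq (rlabels l ++ rlabels r) (y :: s) -> y \in rlabels l.
Proof.
move=> inc_r lr srt p.
have : y \in rlabels l ++ rlabels r by rewrite (perm_mem p) mem_head.
rewrite mem_cat => /orP[// | yr].
have y_le : y <= rlabel l.
  have : rlabel l \in y :: s by rewrite -(perm_mem p) mem_cat mem_rlabel.
  by case/predU1P=> [-> // | /(allP (order_path_min ltn_trans srt)) /ltnW].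
by move: (leq_trans lr (leq_trans (rincreasing_rlabel_min inc_r yr) y_le)); rewrite ltnn.
Qed.

Lemma enum_rtrees_complete m s t : rincreasing t -> rcanonical t -> sorted ltn s ->
  perm_eq (rlabels t) s -> size s <= m -> t \in enum_rtrees m s.
Proof.
elim: t m s => [k|k l IHl r IHr] [|m] s inc can srt p; rewrite -(perm_size p) //.
  by rewrite -(perm_small_eq _ p) -?(perm_size p) // mem_seq1.
move: inc can => /[dup] inc /= /and4P[_ _ il ir] /and3P[lr cl cr] size_t.
case: s srt p => [|x rest] srt p; first by have := perm_size p.
have xk : x = k := esym (rlabel_sorted_head inc srt p).
subst x; move: p; rewrite /= perm_cons => p.
have srt_rest := path_sorted srt.
case: rest srt srt_rest p => [|y r2] srt srt_rest p.
  by have := perm_mem p (rlabel l); rewrite mem_cat mem_rlabel.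
have u_lr : uniq (rlabels l ++ rlabels r).
  by rewrite (perm_uniq p) (sorted_uniq ltn_trans ltnn).
have [pl pr] := perm_filter_mem_cat u_lr p.
have yl := head_mem_rlabels_left ir lr srt_rest p.
have size_filter_le a : size (filter a (y :: r2)) <= m.
  by rewrite (leq_trans (size_subseq (filter_subseq _ _))) // -(perm_size p).
apply/enum_rtrees_nodeP; exists (map [in rlabels l] r2), l, r; split => //.
- by rewrite size_map.
- have -> : y :: mask (map [in rlabels l] r2) r2 = filter [in rlabels l] (y :: r2).
    by rewrite /= yl filter_mask.
  apply: IHl; rewrite ?size_filter_le //.
  exact: (sorted_filter ltn_trans [in rlabels l] srt_rest).
- have -> : mask (map negb (map [in rlabels l] r2)) r2 = filter (predC [in rlabels l]) (y :: r2).
    by rewrite /= yl filter_mask -map_comp.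
  apply: IHr; rewrite ?size_filter_le //.
  exact: (sorted_filter ltn_trans (predC [in rlabels l]) srt_rest).
Qed.

Lemma enum_rtrees_uniq m s : sorted ltn s -> uniq (enum_rtrees m s).
Proof.
elim: m s => [|m IH] // [|x [|y r]] // srt; rewrite enum_rtrees_node.
have srt_yr := path_sorted srt; have srt_r := path_sorted srt_yr.
have srt_l b : sorted ltn (y :: mask b r) := sorted_mask ltn_trans (true :: b) srt_yr.
apply: allpairs_uniq_dep => [|b _|]; first exact: bitseqs_uniq.
  by apply: allpairs_uniq; rewrite ?IH ?srt_l ?(sorted_mask ltn_trans) // => -[? ?] [? ?].
move=> p1 p2 /allpairsPdep[b [_ [bin /allpairsP[[l u] [lin _ ->]] ->]]].
move=> /allpairsPdep[b' [_ [bin' /allpairsP[[l' u'] [lin' _ ->]] ->]]] /= [el eu].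
move: lin'; rewrite -{}el -{}eu => lin'.
have [pl _ _] := enum_rtrees_spec (srt_l b) lin.
have [pl' _ _] := enum_rtrees_spec (srt_l b') lin'.
have [e] : y :: mask b r = y :: mask b' r.
  apply: (irr_sorted_eq ltn_trans ltnn (srt_l b) (srt_l b')) => z.
  by rewrite -(perm_mem pl) (perm_mem pl').
rewrite !mem_bitseqs in bin bin'.
by rewrite (mask_uniq_inj (sorted_uniq ltn_trans ltnn srt_r) (eqP bin) (eqP bin') e).
Qed.

Lemma size_enum_rtrees_node m x y r :
  size (enum_rtrees m.+1 [:: x, y & r]) =
  \sum_(b <- bitseqs (size r))
     size (enum_rtrees m (y :: mask b r)) * size (enum_rtrees m (mask (map negb b) r)).
Proof.
rewrite enum_rtrees_node size_allpairs_dep sumnE big_map.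
by apply: eq_bigr => b _; rewrite size_allpairs.
Qed.

Lemma size_enum_rtrees_eq m m' s s' : size s = size s' -> size s <= m -> size s <= m' ->
  size (enum_rtrees m s) = size (enum_rtrees m' s').
Proof.
elim: m m' s s' => [|m IH] [|m'] [|x [|y r]] [|x' [|y' r']] //= [e] sm sm'.
rewrite -/(enum_rtrees m.+1 [:: x, y & r]) -/(enum_rtrees m'.+1 [:: x', y' & r']).
rewrite !size_enum_rtrees_node e big_seq [RHS]big_seq; apply: eq_bigr => b.
rewrite mem_bitseqs => /eqP sb.
have := count_size id b; have := count_size id (map negb b); rewrite size_map sb => cb cnb.
by congr (_ * _); apply: IH; rewrite /= ?size_mask ?size_map ?sb -?e //; lia.
Qed.

Definition nrtrees (k : nat) : nat := size (enum_rtrees k (iota 0 k)).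

Lemma size_enum_rtrees m s : size s <= m -> size (enum_rtrees m s) = nrtrees (size s).
Proof. by move=> sm; apply: size_enum_rtrees_eq; rewrite ?size_iota. Qed.

Lemma count_map_negb (b : bitseq) : count id (map negb b) = size b - count id b.
Proof. by rewrite count_map -(count_predC id b) addKn. Qed.

Lemma nrtrees_rec k :
  nrtrees k.+2 = \sum_(b <- bitseqs k) nrtrees (count id b).+1 * nrtrees (k - count id b).
Proof.
rewrite {1}/nrtrees [iota 0 k.+2]/= size_enum_rtrees_node size_iota.
rewrite big_seq [RHS]big_seq; apply: eq_bigr => b; rewrite mem_bitseqs => /eqP sb.
have := count_size id b; rewrite sb => cb.
rewrite !size_enum_rtrees /= ?size_mask ?size_map ?count_map_negb ?size_iota ?sb //; lia.
Qed.

Lemma nrtrees_even k : ~~ odd k -> nrtrees k = 0.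
Proof.
move=> even_k; apply/eqP; rewrite size_eq0; apply/eqP.
case E: (enum_rtrees k (iota 0 k)) => [//|t ts].
have t_in : t \in enum_rtrees k (iota 0 k) by rewrite E mem_head.
have [p _ _] := enum_rtrees_spec (iota_ltn_sorted 0 k) t_in.
have := size_rlabels t; rewrite (perm_size p) size_iota => /(congr1 odd).
by rewrite /= oddM even_k.
Qed.

Lemma nrtrees_sym_rec k :
  2 * nrtrees k.+2 = \sum_(0 <= j < k.+2) 'C(k.+1, j) * (nrtrees j * nrtrees (k.+1 - j)).
Proof.
rewrite -(big_bitseqs_count k.+1 (fun j => nrtrees j * nrtrees (k.+1 - j))) /=.
rewrite big_cat !big_map mul2n -addnn nrtrees_rec; congr (_ + _).
rewrite -(big_bitseqs_negb k (fun b => nrtrees (count id b) * nrtrees (k.+1 - count id b))).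
rewrite big_seq [RHS]big_seq; apply: eq_bigr => b; rewrite mem_bitseqs => /eqP sb.
have := count_size id b; rewrite count_map_negb sb mulnC => cb.
by rewrite subSn ?leq_subr // subKn.
Qed.

Lemma big_nat_odd_terms N (F : nat -> nat) : (forall i, F (2 * i) = 0) ->
  \sum_(0 <= j < (2 * N).+1) F j = \sum_(1 <= l < N.+1) F (2 * l - 1).
Proof.
move=> F_even; elim: N => [|N IH]; first by rewrite big_nat1 big_geq // (F_even 0).
have -> : (2 * N.+1).+1 = (2 * N).+3 by lia.
rewrite big_nat_recr // big_nat_recr //= IH [RHS]big_nat_recr //=.
have -> : (2 * N).+2 = 2 * N.+1 by lia.
by rewrite F_even addn0; congr (_ + F _); lia.
Qed.

Definition nshapes (n : nat) : nat := nrtrees (2 * n - 1).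

Lemma nshapes_rec n : 2 <= n ->
  2 * nshapes n = \sum_(1 <= l < n) 'C(2 * n - 2, 2 * l - 1) * nshapes l * nshapes (n - l).
Proof.
case: n => [|[|N]] // _; rewrite /nshapes (_ : 2 * N.+2 - 1 = (2 * N).+3); last lia.
rewrite nrtrees_sym_rec (_ : (2 * N).+3 = (2 * N.+1).+1); last lia.
rewrite big_nat_odd_terms => [|i]; last by rewrite nrtrees_even ?mul0n ?muln0 // oddM.
apply: eq_big_nat => l /andP[l1 lN]; rewrite mulnA.
by congr ('C(_, _) * _ * nrtrees _); lia.
Qed.

Lemma fh_count_nshapes n : fh_count n (nshapes n).
Proof.
rewrite /nshapes /nrtrees; set s := iota 0 (2 * n - 1).
have srt : sorted ltn s := iota_ltn_sorted 0 _.
exists (enum_rtrees (2 * n - 1) s); split => //.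
- move=> i lt_i; set t := nth _ _ i.
  have [p inc _] := enum_rtrees_spec srt (mem_nth (RLeaf 0) lt_i).
  split => //; have := size_rlabels t; rewrite (perm_size p) size_iota; lia.
- move=> i j lt_i lt_j iso_ij.
  have [_ _ can_i] := enum_rtrees_spec srt (mem_nth (RLeaf 0) lt_i).
  have [_ _ can_j] := enum_rtrees_spec srt (mem_nth (RLeaf 0) lt_j).
  apply/eqP; rewrite -(nth_uniq (RLeaf 0) lt_i lt_j (enum_rtrees_uniq _ srt)).
  by rewrite (rtiso_rcanonical_eq iso_ij can_i can_j).
- move=> t [_ pt it]; set ts := enum_rtrees _ s.
  have t_in : rnormalize t \in ts.
    apply: enum_rtrees_complete; rewrite ?size_iota ?rincreasing_rnormalize //.
    + by rewrite rcanonical_rnormalize // (perm_uniq pt) iota_uniq.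
    + exact: perm_trans (perm_rlabels_rnormalize t) pt.
  exists (index (rnormalize t) ts); first by rewrite index_mem.
  by rewrite nth_index //; apply: rtiso_rnormalize.
Qed.

Theorem proposition2 :
  exists K : nat -> nat,
    [/\ forall n, 1 <= n -> fh_count n (K n),
        K 1 = 1, K 2 = 1 &
        forall n, 3 <= n ->
          2 * K n = \sum_(1 <= l < n) 'C(2 * n - 2, 2 * l - 1) * K l * K (n - l)].
Proof.
exists nshapes; split => // [n _ | n n3]; first exact: fh_count_nshapes.
exact/nshapes_rec/ltnW.
Qed.
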